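(* Let $G$ be a connected graph and $H$ an isometric subgraph of $G$ which is a Helly graph. Then: (i) for every $v\in V(G)$, $S_H(v)\neq\varnothing$; (ii) for every edge $uv\in E(G)$ and every $y\in S_H(u)$, we have $d(y,S_H(v))\le 1$.
   Context: Graphs are finite and simple; $d=d_G$ denotes distance in $G$, and $d(y,S)=\min_{s\in S}d(y,s)$. A subgraph $H$ of $G$ is isometric if $d_H(x,y)=d_G(x,y)$ for all $x,y\in V(H)$. For $u\in V(H)$, $k\ge0$, $N_H^k[u]=\{y\in V(H): d_H(u,y)\le k\}$. A graph $H$ is a Helly graph if every subfamily of $\{N_H^k[u]: u\in V(H), k\ge0\}$ whose members pairwise intersect has nonempty intersection. The wide shadow of $v\in V(G)$ on $H$ is $S_H(v)=\{y\in V(H): d(y,x)\le d(v,x)\text{ for all } x\in V(H)\}$. *)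

(* Graphs: a finite simple graph on a finType T is a
   symmetric irreflexive relation e : rel T (vertex set = T). *)
From mathcomp Require Import all_boot all_order.
Set Implicit Arguments. Unset Strict Implicit. Unset Printing Implicit Defensive.

Section Graphs.
Variable T : finType.

Definition simple_graph (e : rel T) : Prop :=
  symmetric e /\ irreflexive e.

Definition connected_graph (e : rel T) : Prop := forall x y : T, connect e x y.

Fixpoint ball (r : rel T) (k : nat) (x : T) : {set T} :=
  match k with
  | 0 => [set x]
  | k'.+1 => ball r k' x :|: [set z | [exists w in ball r k' x, r w z]]
  end.

(* graph distance w.r.t. r: least k with y in ball r k x; every finite
   distance is < #|T|, and #|T| plays the role of infinity. *)
Definition dist (r : rel T) (x y : T) : nat :=
  find (fun k => y \in ball r k x) (iota 0 #|T|).

(* d(y,S) = min_{s in S} d(y,s)  (= #|T| i.e. "infinity" if S is empty) *)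
Definition dist_set (r : rel T) (y : T) (S : {set T}) : nat :=
  \big[minn/#|T|]_(s in S) dist r y s.

Definition subgraph (e : rel T) (VH : {set T}) (eH : rel T) : Prop :=
  symmetric eH /\ forall x y, eH x y -> [&& x \in VH, y \in VH & e x y].

Definition isometric (e : rel T) (VH : {set T}) (eH : rel T) : Prop :=
  forall x y, x \in VH -> y \in VH -> dist eH x y = dist e x y.

(* N_H^k[u] = ball eH k u for u in VH (walks in H stay in V(H)). *)
Definition helly (VH : {set T}) (eH : rel T) : Prop :=
  forall F : (T * nat) -> Prop,
    (forall p, F p -> p.1 \in VH) ->
    (forall p q, F p -> F q -> exists y, (y \in ball eH p.2 p.1) && (y \in ball eH q.2 q.1)) ->
    exists2 y, y \in VH & forall p, F p -> y \in ball eH p.2 p.1.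

Definition wide_shadow (e : rel T) (VH : {set T}) (v : T) : {set T} :=
  [set y in VH | [forall x in VH, dist e y x <= dist e v x]].

End Graphs.

From mathcomp Require Import all_boot all_order.
Import Order.TTheory.

Set Implicit Arguments.
Unset Strict Implicit.
Unset Printing Implicit Defensive.

(* Because H is isometric, the wide shadow S_H(v) is the intersection of the
   balls N_H^{d(v,x)}[x], x in V(H), and any two of these balls meet, since
   d(x,x') <= d(v,x) + d(v,x'). The Helly property makes the intersection
   nonempty, which is (i). For (ii), with y in S_H(u) and uv an edge, we have
   d(y,x) <= d(u,x) <= d(v,x) + 1, so the ball N_H^1[y] also meets each of
   those balls; a vertex of the enlarged intersection is a point of S_H(v) at
   distance at most 1 from y. *)

Section Balls.
Variable T : finType.
Implicit Types (r : rel T) (x y z : T).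

Lemma ball_center r k x : x \in ball r k x.
Proof. by elim: k => [|k IHk] /=; rewrite inE ?IHk. Qed.

Lemma ballSP r k x y : y \in ball r k.+1 x ->
  y \in ball r k x \/ exists2 w, w \in ball r k x & r w y.
Proof.
rewrite /= inE => /orP[|]; first by left.
by rewrite inE => /existsP[w /andP[hw hwy]]; right; exists w.
Qed.

Lemma ball_S r k x y : y \in ball r k x -> y \in ball r k.+1 x.
Proof. by move=> hy /=; rewrite inE hy. Qed.

Lemma ball_mono r k k' x y : k <= k' -> y \in ball r k x -> y \in ball r k' x.
Proof.
move=> /subnK <-; elim: (k' - k) => [|n IHn] // hy.
by rewrite addSn; apply/ball_S/IHn.
Qed.

Lemma ball_step r k x y z : y \in ball r k x -> r y z -> z \in ball r k.+1 x.
Proof.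
move=> hy hyz /=; rewrite !inE; apply/orP; right.
by apply/existsP; exists y; rewrite hy.
Qed.

Lemma ball_cons r k x w y : r x w -> y \in ball r k w -> y \in ball r k.+1 x.
Proof.
move=> hxw; elim: k y => [|k IHk] y.
  by rewrite inE => /eqP ->; apply: (ball_step (ball_center r 0 x)).
case/ballSP => [/IHk/ball_S //|[c /IHk hc hcy]].
exact: ball_step hc hcy.
Qed.

Lemma ball_sym r k x y : symmetric r -> y \in ball r k x -> x \in ball r k y.
Proof.
move=> sym_r; elim: k y => [|k IHk] y; first by rewrite !inE eq_sym.
case/ballSP => [/IHk/ball_S //|[c /IHk hc hcy]].
by apply: ball_cons hc; rewrite sym_r.
Qed.

Lemma ball_trans r i j x y z :
  y \in ball r i x -> z \in ball r j y -> z \in ball r (i + j) x.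
Proof.
move=> hy; elim: j z => [|j IHj] z; first by rewrite addn0 inE => /eqP ->.
rewrite addnS; case/ballSP => [/IHj/ball_S //|[c /IHj hc hcz]].
exact: ball_step hc hcz.
Qed.

Lemma ball_split r i j x z :
  z \in ball r (i + j) x -> exists2 w, w \in ball r i x & z \in ball r j w.
Proof.
elim: j z => [|j IHj] z.
  by rewrite addn0 => hz; exists z => //; apply: ball_center.
rewrite addnS; case/ballSP => [/IHj[w hw hz]|[c /IHj[w hw hc] hcz]].
  by exists w => //; apply: ball_S.
by exists w => //; apply: ball_step hc hcz.
Qed.

Lemma path_ball r x p : path r x p -> last x p \in ball r (size p) x.
Proof.
elim: p x => [|c p IHp] x /=; first by rewrite inE.
by case/andP=> hxc /IHp; apply: ball_cons.
Qed.

Lemma dist_le r k x y : y \in ball r k x -> dist r x y <= k.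
Proof.
move=> hy; rewrite /dist; case: (ltnP k #|T|) => hk; last first.
  by rewrite (leq_trans (find_size _ _)) ?size_iota.
by rewrite leqNgt; apply/negP => /(before_find 0); rewrite nth_iota // add0n hy.
Qed.

Lemma dist_ball r x y : dist r x y < #|T| -> y \in ball r (dist r x y) x.
Proof.
move=> hxy; have hy : has (fun k => y \in ball r k x) (iota 0 #|T|).
  by rewrite has_find size_iota.
by have := nth_find 0 hy; rewrite nth_iota.
Qed.

Lemma mem_ball_dist r k x y :
  dist r x y < #|T| -> (y \in ball r k x) = (dist r x y <= k).
Proof.
move=> hxy; apply/idP/idP; first exact: dist_le.
by move=> hk; apply: ball_mono hk (dist_ball hxy).
Qed.

(* A shortest walk is a path without repetition, hence has fewer than #|T| edges. *)
Lemma dist_lt_card r x y : connect r x y -> dist r x y < #|T|.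
Proof.
case/connectP=> p hp ->; case: (shortenP hp) => q hq uniq_q _.
apply: leq_ltn_trans (dist_le (path_ball hq)) _.
by rewrite -[_ < _]/(size (x :: q) <= #|T|) -(card_uniqP uniq_q) max_card.
Qed.

Lemma dist_sym r x y : symmetric r -> connect r x y -> dist r x y = dist r y x.
Proof.
move=> sym_r hxy; have hyx : connect r y x by rewrite (sym_connect_sym sym_r).
apply/eqP; rewrite eqn_leq; apply/andP; split; apply/dist_le/ball_sym => //;
  exact/dist_ball/dist_lt_card.
Qed.

Lemma dist_triangle r x y z : connect r x y -> connect r y z ->
  dist r x z <= dist r x y + dist r y z.
Proof.
move=> hxy hyz; apply/dist_le/(ball_trans (y := y)); exact/dist_ball/dist_lt_card.
Qed.

Lemma dist_set_le r y (S : {set T}) z m :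
  z \in S -> dist r y z <= m -> dist_set r y S <= m.
Proof. by move=> hz hm; rewrite /dist_set -minEnat -leEnat (bigmin_inf z). Qed.

End Balls.

Section IsometricSubgraph.
Variables (T : finType) (e : rel T) (VH : {set T}) (eH : rel T).
Hypotheses (sym_e : symmetric e) (conn_e : connected_graph e).
Hypotheses (sub_H : subgraph e VH eH) (iso_H : isometric e VH eH).

Lemma ball_subgraph k x y : x \in VH -> y \in ball eH k x -> y \in VH.
Proof.
elim: k y => [|k IHk] y hx; first by rewrite inE => /eqP ->.
case/ballSP => [/IHk -> //|[w _ /(proj2 sub_H)/and3P[] //]].
Qed.

Lemma dist_le_ball_subgraph k x y :
  x \in VH -> y \in ball eH k x -> dist e x y <= k.
Proof.
by move=> hx hy; rewrite -iso_H ?(ball_subgraph hx hy) //; apply: dist_le.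
Qed.

Lemma balls_subgraph_meet i j x x' :
  x \in VH -> x' \in VH -> dist e x x' <= i + j ->
  exists w, (w \in ball eH i x) && (w \in ball eH j x').
Proof.
move=> hx hx' hxx'.
have : x' \in ball eH (i + j) x by rewrite mem_ball_dist iso_H ?dist_lt_card.
case/ball_split=> w hw /(ball_sym (proj1 sub_H)) hw'.
by exists w; rewrite hw hw'.
Qed.

Definition shadow_ball (v : T) (p : T * nat) : Prop :=
  p.1 \in VH /\ p.2 = dist e v p.1.

Lemma shadow_balls_meet v p q : shadow_ball v p -> shadow_ball v q ->
  exists w, (w \in ball eH p.2 p.1) && (w \in ball eH q.2 q.1).
Proof.
case: p q => x k [x' k'] [/= hx ->] [/= hx' ->].
apply: balls_subgraph_meet => //.
by rewrite (dist_sym sym_e (conn_e v x)) dist_triangle.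
Qed.

Lemma mem_wide_shadow_balls v y : y \in VH ->
  (forall x, x \in VH -> y \in ball eH (dist e v x) x) ->
  y \in wide_shadow e VH v.
Proof.
move=> hy hballs; rewrite inE hy; apply/forallP => x; apply/implyP => hx.
by rewrite (dist_sym sym_e (conn_e y x)) dist_le_ball_subgraph ?hballs.
Qed.

Lemma wide_shadow_dist_le u v y x : e u v -> y \in wide_shadow e VH u ->
  x \in VH -> dist e y x <= (dist e v x).+1.
Proof.
move=> huv; rewrite inE => /andP[_ /forallP/(_ x)/implyP hy] /hy/leq_trans->//.
rewrite -add1n (leq_trans (dist_triangle (conn_e u v) (conn_e v x))) ?leq_add2r//.
exact/dist_le/(ball_step (ball_center e 0 u)).
Qed.

Hypothesis helly_H : helly VH eH.

Lemma wide_shadow_neq0 v : wide_shadow e VH v != set0.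
Proof.
have [y hy hballs] := helly_H (fun p hp => proj1 hp) (@shadow_balls_meet v).
apply/set0Pn; exists y; apply: mem_wide_shadow_balls => // x hx.
exact: (hballs (x, dist e v x)).
Qed.

Lemma wide_shadow_edge u v y : e u v -> y \in wide_shadow e VH u ->
  exists2 z, z \in wide_shadow e VH v & dist e y z <= 1.
Proof.
move=> huv hyu; have hy : y \in VH by move: hyu; rewrite inE => /andP[].
pose F p := shadow_ball v p \/ p = (y, 1).
have F_VH p : F p -> p.1 \in VH by case=> [[]|->].
have F_meet p q : F p -> F q ->
    exists w, (w \in ball eH p.2 p.1) && (w \in ball eH q.2 q.1).
  have meet_y x : x \in VH -> exists w,
      (w \in ball eH (dist e v x) x) && (w \in ball eH 1 y).
    move=> hx; apply: balls_subgraph_meet => //.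
    by rewrite (dist_sym sym_e (conn_e x y)) addn1 (wide_shadow_dist_le huv hyu hx).
  rewrite /F; case=> [hp|->] [hq|->].
  - exact: shadow_balls_meet hp hq.
  - by case: p hp => x k [/= hx ->]; apply: meet_y.
  - case: q hq => x' k' [/= hx' ->]; have [w /andP[hw1 hw2]] := meet_y x' hx'.
    by exists w; rewrite hw1 hw2.
  - by exists y; rewrite ball_center.
have [z hz hballs] := helly_H F_VH F_meet.
exists z; first by apply: mem_wide_shadow_balls => // x hx; apply: (hballs (x, _)); left.
by apply: dist_le_ball_subgraph => //; apply: (hballs (y, 1)); right.
Qed.

End IsometricSubgraph.

Theorem lemma2p3 (T : finType) (e : rel T) (VH : {set T}) (eH : rel T) :
  simple_graph e -> connected_graph e ->
  subgraph e VH eH -> isometric e VH eH -> helly VH eH ->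
  (forall v : T, wide_shadow e VH v != set0) /\
  (forall u v : T, e u v -> forall y, y \in wide_shadow e VH u ->
     dist_set e y (wide_shadow e VH v) <= 1).
Proof.
move=> [sym_e _] conn_e sub_H iso_H helly_H; split.
  exact: wide_shadow_neq0 sym_e conn_e sub_H iso_H helly_H.
move=> u v huv y hyu.
have [z hzv hyz] := wide_shadow_edge sym_e conn_e sub_H iso_H helly_H huv hyu.
exact: dist_set_le hzv hyz.
Qed.
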